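(* The following are equivalent for any structures $\mathcal{M}$ and $\mathcal{N}$. (1) $\mathcal{N}$ locally trace defines $\mathcal{M}$. (2) For every $k\ge 2$, every $\mathcal{M}$-definable $k$-hypergraph embeds into an $\mathcal{N}$-definable $k$-hypergraph. (3) For every $k\ge 2$, every $k$-hypergraph that is zero-definable in $\mathcal{M}$ embeds into a $k$-hypergraph that is zero-definable in $\mathcal{N}$.
   Context: ''Definable'' means first-order definable with parameters; ''zero-definable'' means definable without parameters. A $k$-hypergraph is a set with a symmetric $k$-ary relation $E$ such that $E(a_1,\dots,a_k)$ implies the $a_i$ are distinct. An $\mathcal{M}$-definable $k$-hypergraph is one whose vertex set is an $\mathcal{M}$-definable set (a definable subset of some $M^d$) and whose relation is $\mathcal{M}$-definable; embeddings are injective maps preserving and reflecting the relation. $\mathcal{N}$ locally trace defines $\mathcal{M}$ if there is a possibly infinite collection $\mathcal{E}$ of functions $M\to N$ such that every $\mathcal{M}$-definable subset of every $M^m$ is of the form $\{(a_1,\dots,a_m) : (f_1(a_{i_1}),\dots,f_n(a_{i_n}))\in Y\}$ for some $f_1,\dots,f_n\in\mathcal{E}$, $i_1,\dots,i_n\in\{1,\dots,m\}$ and $\mathcal{N}$-definable $Y\subseteq N^n$. *)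

From mathcomp Require Import all_boot all_algebra perm.
Set Implicit Arguments. Unset Strict Implicit. Unset Printing Implicit Defensive.

Record signature := Signature {
  fsym : Type; farity : fsym -> nat;      (* function symbols (constants: arity 0) *)
  rsym : Type; rarity : rsym -> nat }.

(* A structure; carriers are nonempty (standard model-theoretic convention). *)
Record structure (L : signature) := Structure {
  carrier :> Type;
  witness : carrier;
  sfun : forall f : fsym L, ('I_(farity f) -> carrier) -> carrier;
  srel : forall r : rsym L, ('I_(rarity r) -> carrier) -> Prop }.

Inductive term (L : signature) : Type :=
  | Tvar : nat -> term L
  | Tapp : forall f : fsym L, ('I_(farity f) -> term L) -> term L.

Inductive formula (L : signature) : Type :=
  | Feq  : term L -> term L -> formula L
  | Frel : forall r : rsym L, ('I_(rarity r) -> term L) -> formula L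
  | Fbot : formula L
  | Fnot : formula L -> formula L
  | Fand : formula L -> formula L -> formula L
  | For  : formula L -> formula L -> formula L
  | Fimp : formula L -> formula L -> formula L
  | Fex  : nat -> formula L -> formula L
  | Fall : nat -> formula L -> formula L.

Section Semantics.
Variables (L : signature) (M : structure L).

Fixpoint eval_term (s : nat -> M) (t : term L) : M :=
  match t with
  | Tvar n => s n
  | Tapp f args => sfun (fun i => eval_term s (args i))
  end.

Definition upd (s : nat -> M) (n : nat) (a : M) : nat -> M :=
  fun i => if i == n then a else s i.

Fixpoint sat (s : nat -> M) (phi : formula L) : Prop :=
  match phi with
  | Feq t u => eval_term s t = eval_term s u
  | Frel r args => srel (fun i => eval_term s (args i))
  | Fbot => False
  | Fnot p => ~ sat s p
  | Fand p q => sat s p /\ sat s q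
  | For p q => sat s p \/ sat s q
  | Fimp p q => sat s p -> sat s q
  | Fex n p => exists a : M, sat (upd s n a) p
  | Fall n p => forall a : M, sat (upd s n a) p
  end.

Definition ext (m : nat) (a : 'I_m -> M) (s : nat -> M) : nat -> M :=
  fun i => match (insub i : option 'I_m) with Some j => a j | None => s i end.

(* X ⊆ M^m is definable with parameters: the parameters are the values
   of the variables >= m under some assignment s. *)
Definition definable (m : nat) (X : ('I_m -> M) -> Prop) : Prop :=
  exists (phi : formula L) (s : nat -> M),
    forall a : 'I_m -> M, X a <-> sat (ext a s) phi.

Definition zdefinable (m : nat) (X : ('I_m -> M) -> Prop) : Prop :=
  exists phi : formula L,
    forall (a : 'I_m -> M) (s : nat -> M), X a <-> sat (ext a s) phi.

End Semantics.

Definition is_hypergraph (V : Type) (k : nat) (D : V -> Prop)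
    (E : ('I_k -> V) -> Prop) : Prop :=
  (forall a, E a -> forall i, D (a i)) /\
  (forall (a : 'I_k -> V) (sigma : 'S_k), E a <-> E (a \o sigma)) /\
  (forall a, E a -> forall i j, a i = a j -> i = j).

Definition hyp_embedding (V W : Type) (k : nat) (D : V -> Prop)
    (E : ('I_k -> V) -> Prop) (D' : W -> Prop) (E' : ('I_k -> W) -> Prop)
    (f : V -> W) : Prop :=
  (forall x, D x -> D' (f x)) /\
  (forall x y, D x -> D y -> f x = f y -> x = y) /\
  (forall a : 'I_k -> V, (forall i, D (a i)) -> (E a <-> E' (f \o a))).

Definition hyp_embeds (V W : Type) (k : nat) (D : V -> Prop)
    (E : ('I_k -> V) -> Prop) (D' : W -> Prop) (E' : ('I_k -> W) -> Prop)
    : Prop := exists f : V -> W, hyp_embedding D E D' E' f.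

(* A k-tuple of points of M^d, viewed as a point of M^(k*d). *)
Definition unflat (M : Type) (k d : nat) (c : 'I_(k * d) -> M) : 'I_k -> 'I_d -> M :=
  fun i j => c (mxvec_index i j).

Definition def_hypergraph (L : signature) (M : structure L) (k d : nat)
    (D : ('I_d -> M) -> Prop) (E : ('I_k -> 'I_d -> M) -> Prop) : Prop :=
  is_hypergraph D E /\ definable D /\
  definable (fun c : 'I_(k * d) -> M => E (unflat c)).

Definition zdef_hypergraph (L : signature) (M : structure L) (k d : nat)
    (D : ('I_d -> M) -> Prop) (E : ('I_k -> 'I_d -> M) -> Prop) : Prop :=
  is_hypergraph D E /\ zdefinable D /\
  zdefinable (fun c : 'I_(k * d) -> M => E (unflat c)).

Definition locally_trace_defines (LN LM : signature)
    (N : structure LN) (M : structure LM) : Prop :=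
  exists Fam : (M -> N) -> Prop,
    forall (m : nat) (X : ('I_m -> M) -> Prop), definable X ->
      exists (n : nat) (f : 'I_n -> M -> N) (idx : 'I_n -> 'I_m)
             (Y : ('I_n -> N) -> Prop),
        (forall j, Fam (f j)) /\ definable Y /\
        forall a : 'I_m -> M, X a <-> Y (fun j => f j (a (idx j))).

From mathcomp Require Import all_boot all_algebra perm.
From Stdlib Require Import FunctionalExtensionality Classical.
Set Implicit Arguments. Unset Strict Implicit. Unset Printing Implicit Defensive.

(* (1) => (2): apply the local trace definition to the vertex set, to the edge
   relation and to equality.  A vertex v is then coded by the values of the
   finitely many trace functions at its coordinates, followed by the parameters
   of the N-formulas obtained.  Equality makes the code injective, and since
   every code carries the parameters, the image of the vertex set and the
   symmetrised image of the edge relation are zero-definable in N.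
   (3) => (1): after moving its parameters into extra coordinates, a definable
   X in M^m becomes a zero-definable X0 in M^k.  The k-hypergraph whose edges
   are the k-tuples of vertices tagged 1, ..., k whose values lie in X0 is
   zero-definable.  Composing an embedding of it into an N-definable
   hypergraph with the tagging writes X as the trace of an N-definable set. *)

(** * First-order syntax *)

Section Syntax.
Variables (L : signature) (A : structure L).

Fixpoint term_bound (t : term L) : nat :=
  match t with
  | Tvar n => n.+1
  | Tapp f args => \max_(i < farity f) term_bound (args i)
  end.

Fixpoint formula_bound (p : formula L) : nat :=
  match p with
  | Feq t u => maxn (term_bound t) (term_bound u)
  | Frel r args => \max_(i < rarity r) term_bound (args i)
  | Fbot => 0
  | Fnot p | Fex _ p | Fall _ p => formula_bound p
  | Fand p q | For p q | Fimp p q => maxn (formula_bound p) (formula_bound q)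
  end.

Lemma eq_eval_term (t : term L) (s s' : nat -> A) :
  (forall i, i < term_bound t -> s i = s' i) -> eval_term s t = eval_term s' t.
Proof.
elim: t s s' => [n|f args IH] s s' eq_s /=; first exact: eq_s.
congr sfun; apply: functional_extensionality => i; apply: IH => j lt_j.
by apply: eq_s; apply: leq_trans lt_j (leq_bigmax_cond _ _).
Qed.

Lemma eq_sat (p : formula L) (s s' : nat -> A) :
  (forall i, i < formula_bound p -> s i = s' i) -> (sat s p <-> sat s' p).
Proof.
have eq_args n (args : 'I_n -> term L) (t t' : nat -> A) :
    (forall i, i < \max_(j < n) term_bound (args j) -> t i = t' i) ->
    (fun j => eval_term t (args j)) = (fun j => eval_term t' (args j)).
  move=> eq_t; apply: functional_extensionality => j; apply: eq_eval_term => i lt_i.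
  by apply: eq_t; apply: leq_trans lt_i (leq_bigmax_cond _ _).
elim: p s s' => [t u|r args| |p IH|p IHp q IHq|p IHp q IHq|p IHp q IHq|n p IH|n p IH]
  s s' eq_s /=.
- by rewrite (@eq_eval_term t s s') ?(@eq_eval_term u s s') // => i lt_i;
    apply: eq_s; rewrite leq_max lt_i ?orbT.
- by rewrite (eq_args _ _ s s').
- by [].
- by rewrite (IH s s').
- by rewrite (IHp s s') ?(IHq s s') // => i lt_i; apply: eq_s; rewrite leq_max lt_i ?orbT.
- by rewrite (IHp s s') ?(IHq s s') // => i lt_i; apply: eq_s; rewrite leq_max lt_i ?orbT.
- by rewrite (IHp s s') ?(IHq s s') // => i lt_i; apply: eq_s; rewrite leq_max lt_i ?orbT.
- suff eq_upd a : sat (upd s n a) p <-> sat (upd s' n a) p.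
    by split=> -[a]; exists a; apply/eq_upd.
  by apply: IH => i lt_i; rewrite /upd; case: eqP => // _; apply: eq_s.
- suff eq_upd a : sat (upd s n a) p <-> sat (upd s' n a) p.
    by split=> sat_p a; apply/eq_upd.
  by apply: IH => i lt_i; rewrite /upd; case: eqP => // _; apply: eq_s.
Qed.

Fixpoint term_rename (rho : nat -> nat) (t : term L) : term L :=
  match t with
  | Tvar n => Tvar L (rho n)
  | Tapp f args => Tapp (fun i => term_rename rho (args i))
  end.

Fixpoint formula_rename (rho : nat -> nat) (p : formula L) : formula L :=
  match p with
  | Feq t u => Feq (term_rename rho t) (term_rename rho u)
  | Frel r args => Frel (fun i => term_rename rho (args i))
  | Fbot => Fbot L
  | Fnot p => Fnot (formula_rename rho p)
  | Fand p q => Fand (formula_rename rho p) (formula_rename rho q)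
  | For p q => For (formula_rename rho p) (formula_rename rho q)
  | Fimp p q => Fimp (formula_rename rho p) (formula_rename rho q)
  | Fex n p => Fex (rho n) (formula_rename rho p)
  | Fall n p => Fall (rho n) (formula_rename rho p)
  end.

Lemma eval_term_rename rho (t : term L) (s : nat -> A) :
  eval_term s (term_rename rho t) = eval_term (s \o rho) t.
Proof.
elim: t => [n|f args IH] //=.
by congr sfun; apply: functional_extensionality => i; apply: IH.
Qed.

Lemma sat_rename rho (p : formula L) (s : nat -> A) : injective rho ->
  (sat s (formula_rename rho p) <-> sat (s \o rho) p).
Proof.
move=> inj_rho.
have upd_rename (t : nat -> A) n a : upd t (rho n) a \o rho = upd (t \o rho) n a.
  by apply: functional_extensionality => i; rewrite /upd /= inj_eq.
elim: p s => [t u|r args| |p IH|p IHp q IHq|p IHp q IHq|p IHp q IHq|n p IH|n p IH] s /=.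
- by rewrite !eval_term_rename.
- suff -> : (fun i => eval_term s (term_rename rho (args i))) =
            (fun i => eval_term (s \o rho) (args i)) by [].
  by apply: functional_extensionality => i; rewrite eval_term_rename.
- by [].
- by rewrite IH.
- by rewrite IHp IHq.
- by rewrite IHp IHq.
- by rewrite IHp IHq.
- by split=> -[a sat_p]; exists a; move: sat_p; rewrite IH upd_rename.
- by split=> sat_p a; move: (sat_p a); rewrite IH upd_rename.
Qed.

Lemma sat_foldr_Fex (l : seq nat) (p : formula L) (s : nat -> A) :
  sat s (foldr (@Fex L) p l) <->
  exists t : nat -> A, (forall i, i \notin l -> t i = s i) /\ sat t p.
Proof.
elim: l s => [|v l IH] s /=.
  split=> [sat_p|[t [eq_t sat_p]]]; first by exists s.
  by rewrite (_ : s = t) //; apply: functional_extensionality => i; rewrite eq_t.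
split=> [[x /IH [t [eq_t sat_p]]]|[t [eq_t sat_p]]].
  exists t; split=> // i; rewrite in_cons negb_or => /andP[ne_iv notin_i].
  by rewrite eq_t // /upd (negbTE ne_iv).
exists (t v); apply/IH; exists t; split=> // i notin_i; rewrite /upd.
by case: eqP => [->|/eqP ne_iv] //; apply: eq_t; rewrite in_cons negb_or ne_iv.
Qed.

End Syntax.

(** * Closure properties of definable sets *)

Section AssignmentDefinable.
Variables (L : signature) (A : structure L).

Definition asg_definable (S : (nat -> A) -> Prop) :=
  exists p : formula L, forall s, S s <-> sat s p.

Lemma asg_definable_ext S S' :
  asg_definable S -> (forall s, S s <-> S' s) -> asg_definable S'.
Proof. by move=> [p def_p] eqS; exists p => s; rewrite -eqS. Qed.

Lemma asg_definableI S S' :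
  asg_definable S -> asg_definable S' -> asg_definable (fun s => S s /\ S' s).
Proof. by move=> [p def_p] [q def_q]; exists (Fand p q) => s /=; rewrite def_p def_q. Qed.

Lemma asg_definable_imply S S' :
  asg_definable S -> asg_definable S' -> asg_definable (fun s => S s -> S' s).
Proof. by move=> [p def_p] [q def_q]; exists (Fimp p q) => s /=; rewrite def_p def_q. Qed.

Lemma asg_definableN S : asg_definable S -> asg_definable (fun s => ~ S s).
Proof. by move=> [p def_p]; exists (Fnot p) => s /=; rewrite def_p. Qed.

Lemma asg_definable_const (P : Prop) : asg_definable (fun _ => P).
Proof.
have [HP|HP] := classic P; last by exists (Fbot L).
by exists (Fnot (Fbot L)) => s; split=> // _ [].
Qed.

Lemma asg_definable_eq i j : asg_definable (fun s => s i = s j).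
Proof. by exists (Feq (Tvar L i) (Tvar L j)). Qed.

Lemma asg_definable_forall (T : finType) (S : T -> (nat -> A) -> Prop) :
  (forall x, asg_definable (S x)) -> asg_definable (fun s => forall x, S x s).
Proof.
move=> defS; suff: asg_definable (fun s => forall x, x \in enum T -> S x s).
  by move/asg_definable_ext; apply=> s; split=> Ss x //; apply: Ss; rewrite mem_enum.
elim: (enum T) => [|y l IH]; first by apply: asg_definable_ext (asg_definable_const True) _.
apply: asg_definable_ext (asg_definableI (defS y) IH) _ => s; split.
  by move=> [Sy Sl] x; rewrite in_cons => /predU1P[->|/Sl].
by move=> Ss; split=> [|x l_x]; apply: Ss; rewrite in_cons ?eqxx ?l_x ?orbT.
Qed.

Lemma asg_definable_exists (T : finType) (S : T -> (nat -> A) -> Prop) :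
  (forall x, asg_definable (S x)) -> asg_definable (fun s => exists x, S x s).
Proof.
move=> defS; apply: asg_definable_ext
  (asg_definableN (asg_definable_forall (fun x => asg_definableN (defS x)))) _ => s.
split=> [|[x Sx] nS]; last exact: nS x Sx.
by move=> nS; apply: NNPP => nex; apply: nS => x Sx; apply: nex; exists x.
Qed.

Lemma asg_definable_shift S K :
  asg_definable S -> asg_definable (fun s => S (fun i => s (i + K))).
Proof.
move=> [p def_p]; exists (formula_rename (addn^~ K) p) => s.
by rewrite sat_rename; [apply: def_p | apply: addIn].
Qed.

Lemma asg_definable_bounded S : asg_definable S ->
  exists B, forall s s', (forall i, i < B -> s i = s' i) -> (S s <-> S s').
Proof.
by move=> [p def_p]; exists (formula_bound p) => s s' eq_s; rewrite !def_p; apply: eq_sat.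
Qed.

(* [s \o sigma] is read off existentially quantified copies
   [x_(K + i) = x_(sigma i)]; [K] exceeds every [sigma i], so no copy clobbers
   a variable it is copied from. *)
Lemma asg_definable_comp S (sigma : nat -> nat) :
  asg_definable S -> asg_definable (fun s => S (s \o sigma)).
Proof.
move=> defS; have [B bS] := asg_definable_bounded defS.
pose K := (\max_(i < B) sigma i).+1.
have lt_sigma i : i < B -> sigma i < K.
  by move=> lt_i; rewrite ltnS (bigmax_sup (Ordinal lt_i)).
pose S2 t := (forall i : 'I_B, t (i + K) = t (sigma i)) /\ S (fun i => t (i + K)).
have defS2 : asg_definable S2.
  apply: asg_definableI; last exact: asg_definable_shift.
  by apply: asg_definable_forall => i; apply: asg_definable_eq.
have [p def_p] := defS2; exists (foldr (@Fex L) p (iota K B)) => s.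
rewrite sat_foldr_Fex; split=> [Ss|[t [eq_t /def_p [copy_t St]]]].
  exists (fun i => if K <= i < K + B then s (sigma (i - K)) else s i); split; last apply/def_p.
    by move=> i; rewrite mem_iota => /negbTE ->.
  split=> [i|]; first by rewrite /= leq_addl addnC ltn_add2l ltn_ord addKn leqNgt lt_sigma.
  by rewrite -(bS (s \o sigma)) // => i lt_i; rewrite /= leq_addl addnC ltn_add2l lt_i addKn.
rewrite (bS _ (fun i => t (i + K))) // => i lt_i /=.
by rewrite (copy_t (Ordinal lt_i)) eq_t // mem_iota negb_and -ltnNge lt_sigma.
Qed.

End AssignmentDefinable.

Section TupleDefinable.
Variables (L : signature) (A : structure L).

Definition tuple_of m (s : nat -> A) : 'I_m -> A := fun i => s i.
Arguments tuple_of : clear implicits.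

Lemma ext_ord m (a : 'I_m -> A) s (i : 'I_m) : ext a s i = a i.
Proof. by rewrite /ext valK. Qed.

Lemma ext_ge m (a : 'I_m -> A) s i : m <= i -> ext a s i = s i.
Proof. by move=> le_mi; rewrite /ext insubF // ltnNge le_mi. Qed.

Lemma ext_tuple_of m (s : nat -> A) : ext (tuple_of m s) s = s.
Proof.
apply: functional_extensionality => i.
by case: (ltnP i m) => [lt_im|/ext_ge //]; rewrite (ext_ord _ _ (Ordinal lt_im)).
Qed.

Lemma tuple_of_ext m (a : 'I_m -> A) s : tuple_of m (ext a s) = a.
Proof. by apply: functional_extensionality => i; rewrite /tuple_of ext_ord. Qed.

Lemma zdefinableE m (X : ('I_m -> A) -> Prop) :
  zdefinable X <-> asg_definable (fun s => X (tuple_of m s)).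
Proof.
split=> [[p def_p]|[p def_p]]; exists p.
  by move=> s; rewrite (def_p _ s) ext_tuple_of.
by move=> a s; rewrite -def_p tuple_of_ext.
Qed.

Lemma zdefinable_ext m (X Y : ('I_m -> A) -> Prop) :
  zdefinable X -> (forall a, X a <-> Y a) -> zdefinable Y.
Proof. by move=> /zdefinableE defX eqXY; apply/zdefinableE; apply: asg_definable_ext defX _. Qed.

Lemma zdefinableI m (X Y : ('I_m -> A) -> Prop) :
  zdefinable X -> zdefinable Y -> zdefinable (fun a => X a /\ Y a).
Proof. by move=> /zdefinableE defX /zdefinableE defY; apply/zdefinableE/asg_definableI. Qed.

Lemma zdefinable_imply m (X Y : ('I_m -> A) -> Prop) :
  zdefinable X -> zdefinable Y -> zdefinable (fun a => X a -> Y a).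
Proof. by move=> /zdefinableE defX /zdefinableE defY; apply/zdefinableE/asg_definable_imply. Qed.

Lemma zdefinableN m (X : ('I_m -> A) -> Prop) : zdefinable X -> zdefinable (fun a => ~ X a).
Proof. by move=> /zdefinableE defX; apply/zdefinableE/asg_definableN. Qed.

Lemma zdefinable_const m (P : Prop) : zdefinable (fun _ : 'I_m -> A => P).
Proof. exact/zdefinableE/asg_definable_const. Qed.

Lemma zdefinable_eq m (i j : 'I_m) : zdefinable (fun a : 'I_m -> A => a i = a j).
Proof. exact/zdefinableE/asg_definable_eq. Qed.

Lemma zdefinable_forall m (T : finType) (X : T -> ('I_m -> A) -> Prop) :
  (forall x, zdefinable (X x)) -> zdefinable (fun a => forall x, X x a).
Proof. by move=> defX; apply/zdefinableE/asg_definable_forall => x; apply/zdefinableE. Qed.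

Lemma zdefinable_exists m (T : finType) (X : T -> ('I_m -> A) -> Prop) :
  (forall x, zdefinable (X x)) -> zdefinable (fun a => exists x, X x a).
Proof. by move=> defX; apply/zdefinableE/asg_definable_exists => x; apply/zdefinableE. Qed.

Lemma zdefinable_comp n m (X : ('I_n -> A) -> Prop) (r : 'I_n -> 'I_m) :
  zdefinable X -> zdefinable (fun a : 'I_m -> A => X (a \o r)).
Proof.
move=> /zdefinableE defX; apply/zdefinableE.
pose sigma i := if insub i is Some j then val (r j) else 0.
apply: asg_definable_ext (asg_definable_comp sigma defX) _ => s.
suff -> : tuple_of n (s \o sigma) = tuple_of m s \o r by [].
by apply: functional_extensionality => i; rewrite /tuple_of /sigma /= valK.
Qed.

Lemma zdefinable_definable m (X : ('I_m -> A) -> Prop) : zdefinable X -> definable X.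
Proof. by move=> [p def_p]; exists p, (fun _ => witness A) => a; apply: def_p. Qed.

End TupleDefinable.

Definition catf (T : Type) n P (y : 'I_n -> T) (p : 'I_P -> T) : 'I_(n + P) -> T :=
  fun i => match split i with inl j => y j | inr q => p q end.

Lemma catf_lshift (T : Type) n P (y : 'I_n -> T) (p : 'I_P -> T) j :
  catf y p (lshift P j) = y j.
Proof. by rewrite /catf (unsplitK (inl j : 'I_n + 'I_P)). Qed.

Lemma catf_rshift (T : Type) n P (y : 'I_n -> T) (p : 'I_P -> T) j :
  catf y p (rshift n j) = p j.
Proof. by rewrite /catf (unsplitK (inr j : 'I_n + 'I_P)). Qed.

Lemma definable_zdefinable_param (L : signature) (A : structure L) n
    (Y : ('I_n -> A) -> Prop) : definable Y ->
  exists P (p : 'I_P -> A) (X : ('I_(n + P) -> A) -> Prop),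
    zdefinable X /\ forall y, Y y <-> X (catf y p).
Proof.
move=> [phi [s def_phi]].
have bound_phi i : i < formula_bound phi -> i < n + formula_bound phi.
  by move=> lt_i; apply: leq_trans lt_i (leq_addl _ _).
exists (formula_bound phi), (fun q => s (n + q)), (fun a => sat (ext a s) phi); split.
  apply/zdefinableE; exists phi => t; apply: eq_sat => i /bound_phi lt_i.
  by rewrite (ext_ord _ _ (Ordinal lt_i)).
move=> y; rewrite def_phi; apply: eq_sat => i /bound_phi lt_i.
rewrite [RHS](ext_ord _ _ (Ordinal lt_i)) /catf.
by case: splitP => [j /= ->|q /= ->]; rewrite ?ext_ord // ext_ge // leq_addr.
Qed.

Definition decode k d (y : 'I_(k * d)) : 'I_k * 'I_d :=
  enum_val (cast_ord (esym (mxvec_cast k d)) y).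

Definition flat (T : Type) k d (b : 'I_k -> 'I_d -> T) : 'I_(k * d) -> T :=
  fun y => b (decode y).1 (decode y).2.

Lemma decodeK k d (i : 'I_k) (l : 'I_d) : decode (mxvec_index i l) = (i, l).
Proof. by rewrite /decode /mxvec_index cast_ordK enum_rankK. Qed.

Lemma flatK (T : Type) k d : cancel (@flat T k d) (@unflat T k d).
Proof.
move=> b; apply: functional_extensionality => i; apply: functional_extensionality => l.
by rewrite /unflat /flat decodeK.
Qed.

Lemma zdefinable_unflat_comp (L : signature) (A : structure L) k e n
    (Z : ('I_n -> A) -> Prop) (r : 'I_n -> 'I_k * 'I_e) :
  zdefinable Z -> zdefinable (fun c : 'I_(k * e) -> A => Z (fun x => unflat c (r x).1 (r x).2)).
Proof. exact: (zdefinable_comp (fun x => mxvec_index (r x).1 (r x).2)). Qed.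

(** * Hypergraphs *)

Section SymmetricClosure.
Variables (V : Type) (k : nat) (D : V -> Prop) (Y : ('I_k -> V) -> Prop).

Definition sym_closure (W : 'I_k -> V) : Prop :=
  (forall i, D (W i)) /\ injective W /\ forall s : 'S_k, Y (W \o s).

Lemma sym_closure_hypergraph : is_hypergraph D sym_closure.
Proof.
split; first by move=> W [].
split; last by move=> W [_ []].
move=> W t; split=> -[DW [injW YW]]; split.
- by move=> i; apply: DW.
- split; first exact: inj_comp injW (@perm_inj _ t).
  move=> s; rewrite (_ : W \o t \o s = W \o (s * t)%g) //.
  by apply: functional_extensionality => i; rewrite /= permM.
- by move=> i; rewrite -(permKV t i); apply: DW.
- split=> [i j eqW|s].
    by move: (injW (t^-1 i)%g (t^-1 j)%g); rewrite /= !permKV => /(_ eqW) /perm_inj.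
  rewrite (_ : W \o s = W \o t \o (s * t^-1)%g); first exact: YW.
  by apply: functional_extensionality => i; rewrite /= permM permKV.
Qed.

Lemma sym_closure_embedding (U : Type) (D0 : U -> Prop) (E0 : ('I_k -> U) -> Prop)
    (g : U -> V) :
  is_hypergraph D0 E0 -> injective g -> (forall v, D0 v <-> D (g v)) ->
  (forall b, (forall i, D0 (b i)) -> E0 b <-> Y (g \o b)) ->
  hyp_embedding D0 E0 D sym_closure g.
Proof.
move=> [_ [symE0 distinctE0]] inj_g eqD eqE; split; first by move=> v /eqD.
split=> [x y _ _ /inj_g //|a Da].
have Das (s : 'S_k) i : D0 ((a \o s) i) by apply: Da.
split=> [E0a|[_ [_ Ys]]].
  split=> [i|]; first exact/eqD.
  split=> [i j /inj_g|s]; first exact: distinctE0 E0a i j.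
  by apply/(eqE (a \o s) (Das s)); rewrite -symE0.
by apply/(symE0 a 1%g)/(eqE _ (Das 1%g)); apply: Ys.
Qed.

End SymmetricClosure.

Lemma zdefinable_sym_closure (L : signature) (A : structure L) k e
    (D : ('I_e -> A) -> Prop) (Y : ('I_k -> 'I_e -> A) -> Prop) :
  zdefinable D -> zdefinable (fun c : 'I_(k * e) -> A => Y (unflat c)) ->
  zdefinable (fun c : 'I_(k * e) -> A => sym_closure D Y (unflat c)).
Proof.
move=> defD defY; apply: zdefinableI; [|apply: zdefinableI].
- by apply: zdefinable_forall => i; apply: (zdefinable_unflat_comp (fun l => (i, l)) defD).
- apply: zdefinable_forall => i; apply: zdefinable_forall => j.
  have defEq := zdefinable_imply
    (zdefinable_forall (fun l : 'I_e => zdefinable_eq A (mxvec_index i l) (mxvec_index j l)))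
    (zdefinable_const A (k * e) (i = j)).
  apply: zdefinable_ext defEq _ => c; split=> inj_ij eq_ij; apply: inj_ij.
    by move=> l; rewrite -[RHS]/(unflat c j l) -eq_ij.
  by apply: functional_extensionality.
- apply: zdefinable_forall => s.
  apply: zdefinable_ext (zdefinable_unflat_comp (fun x => (s (decode x).1, (decode x).2)) defY) _.
  by move=> c; rewrite /= (flatK (fun i => unflat c (s i))).
Qed.

(** * Local trace definitions yield hypergraph embeddings *)

Section Code.
Variables (V W : Type) (J Pt : finType) (F : J -> V -> W) (p : Pt -> W) (d : nat).

Definition code_index := ((J * 'I_d) + Pt)%type.

(* The parameters [p] are stored in every vertex code, so formulas about codes
   need no parameters. *)
Definition code (v : 'I_d -> V) (c : 'I_#|{: code_index}|) : W :=
  match enum_val c with inl (j, l) => F j (v l) | inr q => p q end.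

Lemma code_rank v t :
  code v (enum_rank t) = match t with inl (j, l) => F j (v l) | inr q => p q end.
Proof. by rewrite /code enum_rankK. Qed.

Lemma code_inj : (forall x y, (forall j, F j x = F j y) -> x = y) -> injective code.
Proof.
move=> sepF v v' eq_code; apply: functional_extensionality => l; apply: sepF => j.
move: (congr1 (fun w => w (enum_rank (inl (j, l) : code_index))) eq_code).
by rewrite /= !code_rank.
Qed.

(* The position, in the codes of the vertices [b], of position [x] of a trace
   tuple of [b]; parameter positions are read from the code of vertex [i0]. *)
Definition code_coord k n Q (i0 : 'I_k) (sigma : 'I_n -> J) (idx : 'I_n -> 'I_k * 'I_d)
    (tau : 'I_Q -> Pt) (x : 'I_(n + Q)) : 'I_k * 'I_#|{: code_index}| :=
  match split x with
  | inl j => ((idx j).1, enum_rank (inl (sigma j, (idx j).2) : code_index))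
  | inr q => (i0, enum_rank (inr (tau q) : code_index))
  end.

Lemma catf_code k n Q i0 sigma idx tau (b : 'I_k -> 'I_d -> V) :
  catf (fun j => F (sigma j) (b (idx j).1 (idx j).2)) (p \o tau) =
  (fun x => code (b (@code_coord k n Q i0 sigma idx tau x).1) (code_coord i0 sigma idx tau x).2).
Proof.
apply: functional_extensionality => x; rewrite /catf /code_coord.
by case: (split x) => [j|q]; rewrite code_rank.
Qed.

End Code.

Section Forward.
Variables (LM LN : signature) (M : structure LM) (N : structure LN).
Hypothesis ltdNM : locally_trace_defines N M.

Lemma ltd_zdefinable_trace m (X : ('I_m -> M) -> Prop) : definable X ->
  exists n (f : 'I_n -> M -> N) (idx : 'I_n -> 'I_m) P (p : 'I_P -> N)
         (Z : ('I_(n + P) -> N) -> Prop),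
    zdefinable Z /\ forall a, X a <-> Z (catf (fun j => f j (a (idx j))) p).
Proof.
move=> defX; have [Fam traceFam] := ltdNM.
have [n [f [idx [Y [_ [defY eqXY]]]]]] := traceFam m X defX.
have [P [p [Z [defZ eqYZ]]]] := definable_zdefinable_param defY.
by exists n, f, idx, P, p, Z; split=> // a; rewrite eqXY eqYZ.
Qed.

Lemma ltd_separating_family :
  exists n (f : 'I_n -> M -> N), forall x y, (forall j, f j x = f j y) -> x = y.
Proof.
have [Fam traceFam] := ltdNM.
have [n [f [idx [Y [_ [_ eqY]]]]]] := traceFam 2 (fun a => a ord0 = a ord_max)
  (zdefinable_definable (zdefinable_eq M ord0 ord_max)).
exists n, f => x y eq_f; pose a (i : 'I_2) := if i == ord0 then x else y.
suff : a ord0 = a ord_max by [].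
apply/eqY; rewrite (_ : (fun j => f j (a (idx j))) = (fun j => f j x)).
  exact/(eqY (fun _ => x)).
by apply: functional_extensionality => j; rewrite /a; case: eqP.
Qed.

Lemma ltd_def_hypergraph_embeds k d (D : ('I_d -> M) -> Prop)
    (E : ('I_k -> 'I_d -> M) -> Prop) :
  0 < k -> def_hypergraph D E ->
  exists e (D' : ('I_e -> N) -> Prop) (E' : ('I_k -> 'I_e -> N) -> Prop),
    zdef_hypergraph D' E' /\ hyp_embeds D E D' E'.
Proof.
move=> k_gt0 [hypDE [defD defE]].
have [n1 [f1 [idx1 [P1 [p1 [Z1 [defZ1 eqD]]]]]]] := ltd_zdefinable_trace defD.
have [n2 [f2 [idx2 [P2 [p2 [Z2 [defZ2 eqE]]]]]]] := ltd_zdefinable_trace defE.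
have [n3 [f3 sep_f3]] := ltd_separating_family.
pose J := ('I_n1 + 'I_n2 + 'I_n3)%type; pose Pt := ('I_P1 + 'I_P2)%type.
pose F (j : J) := match j with inl (inl j) => f1 j | inl (inr j) => f2 j | inr j => f3 j end.
pose p (q : Pt) := match q with inl q => p1 q | inr q => p2 q end.
pose r1 := @code_coord J Pt d 1 n1 P1 ord0 (inl \o inl) (fun j => (ord0, idx1 j)) inl.
pose r2 := @code_coord J Pt d k n2 P2 (Ordinal k_gt0) (inl \o inr) (fun j => decode (idx2 j)) inr.
pose D' w := Z1 (fun x => w (r1 x).2).
pose Y W := Z2 (fun x => W (r2 x).1 (r2 x).2).
have defD' : zdefinable D' := zdefinable_comp (fun x => (r1 x).2) defZ1.
exists #|{: code_index J Pt d}|, D', (sym_closure D' Y); split.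
  split; first exact: sym_closure_hypergraph.
  by split=> //; apply: zdefinable_sym_closure defD' (zdefinable_unflat_comp r2 defZ2).
exists (code F p (d := d)); apply: sym_closure_embedding => //.
- by apply: code_inj => x y eqF; apply: sep_f3 => j; apply: (eqF (inr j)).
- move=> v; rewrite eqD.
  by rewrite (catf_code F p (ord0 : 'I_1) (inl \o inl) (fun j => (ord0, idx1 j)) inl (fun _ => v)).
- move=> b _; rewrite -{1}(flatK b) eqE.
  by rewrite (catf_code F p (Ordinal k_gt0) (inl \o inr) (fun j => decode (idx2 j)) inr b).
Qed.

End Forward.

(** * Hypergraph embeddings yield local trace definitions *)

Section TaggedHypergraph.
Variables (L : signature) (A : structure L) (k : nat).

Definition tag_index := option (option 'I_k).

Definition tag_pos (t : tag_index) : 'I_#|{: tag_index}| := enum_rank t.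

(* A vertex stores its value at [tag_pos None]; it is tagged [i] when exactly
   position [Some (Some i)] agrees with the reference position [Some None],
   which makes tags zero-definable. *)
Definition tagged (i : 'I_k) (v : 'I_#|{: tag_index}| -> A) : Prop :=
  v (tag_pos (Some (Some i))) = v (tag_pos (Some None)) /\
  forall j, j <> i -> v (tag_pos (Some (Some j))) <> v (tag_pos (Some None)).

Definition tagged_vertex (v : 'I_#|{: tag_index}| -> A) := exists i, tagged i v.

Definition sorted_edge (X : ('I_k -> A) -> Prop) (b : 'I_k -> 'I_#|{: tag_index}| -> A) :=
  (forall i, tagged i (b i)) /\ X (fun i => b i (tag_pos None)).

Definition tagged_edge (X : ('I_k -> A) -> Prop) (b : 'I_k -> 'I_#|{: tag_index}| -> A) :=
  exists s : 'S_k, sorted_edge X (b \o s).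

Lemma tagged_uniq i j v : tagged i v -> tagged j v -> i = j.
Proof. by move=> [tag_i _] [_ untag_j]; apply: NNPP => ne_ij; apply: untag_j tag_i. Qed.

Lemma zdefinable_tagged i : zdefinable (tagged i).
Proof.
apply: zdefinableI; first exact: zdefinable_eq.
apply: zdefinable_forall => j; apply: zdefinable_imply; first exact: zdefinable_const.
by apply: zdefinableN; apply: zdefinable_eq.
Qed.

Lemma tagged_edge_tagged X b i : tagged_edge X b -> tagged_vertex (b i).
Proof.
by move=> [s [tag_b _]]; exists (s^-1 i)%g; move: (tag_b (s^-1 i)%g); rewrite /= permKV.
Qed.

Lemma tagged_hypergraph X : is_hypergraph tagged_vertex (tagged_edge X).
Proof.
split; first by move=> b edge_b i; apply: tagged_edge_tagged edge_b.
split=> [b t|b edge_b i j eq_b].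
  have edge_comp b' (t' : 'S_k) : tagged_edge X b' -> tagged_edge X (b' \o t').
    move=> [s edge_s]; exists (s * t'^-1)%g.
    rewrite (_ : b' \o t' \o (s * t'^-1)%g = b' \o s) //.
    by apply: functional_extensionality => i; rewrite /= permM permKV.
  split; first exact: edge_comp.
  move/(edge_comp _ t^-1%g); rewrite (_ : b \o t \o t^-1%g = b) //.
  by apply: functional_extensionality => i; rewrite /= permKV.
have [s [tag_b _]] := edge_b.
have tag_i := tag_b (s^-1 i)%g; have tag_j := tag_b (s^-1 j)%g.
rewrite /= !permKV eq_b in tag_i tag_j.
exact: perm_inj (tagged_uniq tag_i tag_j).
Qed.

Lemma zdef_tagged_hypergraph X : zdefinable X -> zdef_hypergraph tagged_vertex (tagged_edge X).
Proof.
move=> defX; split; first exact: tagged_hypergraph.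
split; first by apply: zdefinable_exists => i; apply: zdefinable_tagged.
apply: zdefinable_exists => s; apply: zdefinableI.
  apply: zdefinable_forall => i.
  exact: (zdefinable_unflat_comp (fun l => (s i, l)) (zdefinable_tagged i)).
exact: (zdefinable_unflat_comp (fun i => (s i, tag_pos None)) defX).
Qed.

Variables (u w : A).
Hypothesis neq_uw : u <> w.

Definition tag_vertex (i : 'I_k) (x : A) (c : 'I_#|{: tag_index}|) : A :=
  match enum_val c with
  | None => x
  | Some None => u
  | Some (Some j) => if j == i then u else w
  end.

Lemma tag_vertex_pos i x t :
  tag_vertex i x (tag_pos t) =
  match t with None => x | Some None => u | Some (Some j) => if j == i then u else w end.
Proof. by rewrite /tag_vertex /tag_pos enum_rankK. Qed.

Lemma tagged_tag_vertex i j x : tagged j (tag_vertex i x) <-> j = i.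
Proof.
rewrite /tagged !tag_vertex_pos; split=> [[]|->]; first by case: eqP => // _ /esym.
by rewrite eqxx; split=> // j' /eqP/negbTE; rewrite tag_vertex_pos => ->; apply: nesym.
Qed.

Lemma tagged_edge_tag_vertex X y : tagged_edge X (fun i => tag_vertex i (y i)) <-> X y.
Proof.
split=> [[s [tag_s Xs]]|Xy].
  have fix_s i : s i = i by apply/esym/(tagged_tag_vertex (s i) i); apply: tag_s.
  rewrite (_ : y = fun i => tag_vertex (s i) (y (s i)) (tag_pos None)) //.
  by apply: functional_extensionality => i; rewrite tag_vertex_pos fix_s.
exists 1%g; split=> [i|]; first by rewrite /= perm1; apply/tagged_tag_vertex.
rewrite (_ : (fun i => _) = y) //.
by apply: functional_extensionality => i; rewrite /= perm1 tag_vertex_pos.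
Qed.

End TaggedHypergraph.

Section Backward.
Variables (LM LN : signature) (M : structure LM) (N : structure LN).

Definition trace_definable m (X : ('I_m -> M) -> Prop) :=
  exists n (f : 'I_n -> M -> N) (idx : 'I_n -> 'I_m) (Y : ('I_n -> N) -> Prop),
    definable Y /\ forall a, X a <-> Y (fun j => f j (a (idx j))).

Lemma ltd_of_trace_definable :
  (forall m (X : ('I_m -> M) -> Prop), definable X -> trace_definable X) ->
  locally_trace_defines N M.
Proof.
move=> traceX; exists (fun _ => True) => m X /traceX [n [f [idx [Y [defY eqXY]]]]].
by exists n, f, idx, Y.
Qed.

Lemma trace_definable_const_tuples m (X : ('I_m -> M) -> Prop) :
  (forall a b : 'I_m -> M, a = b) -> trace_definable X.
Proof.
move=> all_eq; have idx : 'I_0 -> 'I_m by case.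
exists 0, (fun _ _ => witness N), idx, (fun _ => X (fun _ => witness M)); split.
  exact/zdefinable_definable/zdefinable_const.
by move=> a; rewrite (all_eq a (fun _ => witness M)).
Qed.

Hypothesis embed_zdef_hypergraph :
  forall k d (D : ('I_d -> M) -> Prop) (E : ('I_k -> 'I_d -> M) -> Prop),
    2 <= k -> zdef_hypergraph D E ->
    exists e (D' : ('I_e -> N) -> Prop) (E' : ('I_k -> 'I_e -> N) -> Prop),
      definable (fun c : 'I_(k * e) -> N => E' (unflat c)) /\ hyp_embeds D E D' E'.

Lemma trace_definable_tagged m (X : ('I_m -> M) -> Prop) (i0 : 'I_m) (u w : M) :
  u <> w -> definable X -> trace_definable X.
Proof.
move=> neq_uw /definable_zdefinable_param [P [p [X0 [defX0 eqX]]]].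
(* The two dummy vertices only ensure [2 <= k]. *)
pose k := m + (P + 2).
pose r : 'I_(m + P) -> 'I_k := catf (lshift (P + 2)) (fun q => rshift m (lshift 2 q)).
pose y_of a : 'I_k -> M := catf a (catf p (fun _ => u)).
have eqX1 a : X a <-> X0 (y_of a \o r).
  rewrite eqX (_ : y_of a \o r = catf a p) //.
  apply: functional_extensionality => x; rewrite -(splitK x).
  by case: (split x) => [j|q]; rewrite /= /r /y_of !(catf_lshift, catf_rshift).
have k_ge2 : 2 <= k by rewrite /k addnA leq_addl.
have [e [D' [E' [defE' [f [_ [_ embed_f]]]]]]] :=
  embed_zdef_hypergraph k_ge2 (zdef_tagged_hypergraph (zdefinable_comp r defX0)).
pose src (i : 'I_k) := if split i is inl j then j else i0.
have y_of_src a i : y_of a i = y_of (fun _ => a (src i)) i.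
  by rewrite /y_of /catf /src; case: (split i).
pose g i x := f (tag_vertex u w i (y_of (fun _ => x) i)).
exists (k * e), (fun z x => g (decode z).1 x (decode z).2), (fun z => src (decode z).1).
exists (fun c => E' (unflat c)); split=> // a.
rewrite eqX1 -(tagged_edge_tag_vertex neq_uw (fun y => X0 (y \o r))) embed_f; last first.
  by move=> i; exists i; apply/tagged_tag_vertex.
rewrite (flatK (fun i => g i (a (src i)))).
suff -> : (fun i => tag_vertex u w i (y_of a i)) =
          (fun i => tag_vertex u w i (y_of (fun _ => a (src i)) i)) by [].
by apply: functional_extensionality => i; rewrite -y_of_src.
Qed.

Lemma ltd_of_zdef_hypergraph_embeds : locally_trace_defines N M.
Proof.
apply: ltd_of_trace_definable => m X defX.
(* Without a coordinate and two distinct elements, [X] is constant. *)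
have [[i0 [u [w neq_uw]]]|no_pair] := classic (exists (i0 : 'I_m) (u w : M), u <> w).
  exact: trace_definable_tagged neq_uw defX.
apply: trace_definable_const_tuples => a b; apply: functional_extensionality => i.
by apply: NNPP => neq_ab; apply: no_pair; exists i, (a i), (b i).
Qed.

End Backward.

Lemma zdef_hypergraph_def (L : signature) (A : structure L) k d
    (D : ('I_d -> A) -> Prop) (E : ('I_k -> 'I_d -> A) -> Prop) :
  zdef_hypergraph D E -> def_hypergraph D E.
Proof. by move=> [hypDE [defD defE]]; split=> //; split; apply: zdefinable_definable. Qed.

Theorem proposition2p10 (LM LN : signature) (M : structure LM) (N : structure LN) :
  (locally_trace_defines N M <->
   (forall (k d : nat) (D : ('I_d -> M) -> Prop) (E : ('I_k -> 'I_d -> M) -> Prop),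
      2 <= k -> def_hypergraph D E ->
      exists (e : nat) (D' : ('I_e -> N) -> Prop) (E' : ('I_k -> 'I_e -> N) -> Prop),
        def_hypergraph D' E' /\ hyp_embeds D E D' E'))
  /\
  (locally_trace_defines N M <->
   (forall (k d : nat) (D : ('I_d -> M) -> Prop) (E : ('I_k -> 'I_d -> M) -> Prop),
      2 <= k -> zdef_hypergraph D E ->
      exists (e : nat) (D' : ('I_e -> N) -> Prop) (E' : ('I_k -> 'I_e -> N) -> Prop),
        zdef_hypergraph D' E' /\ hyp_embeds D E D' E')).
Proof.
split; split=> [ltdNM k d D E k_ge2 hypDE|embedNM].
- have [e [D' [E' [zhypDE' embDE]]]] := ltd_def_hypergraph_embeds ltdNM (ltnW k_ge2) hypDE.
  by exists e, D', E'; split=> //; apply: zdef_hypergraph_def.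
- apply: ltd_of_zdef_hypergraph_embeds => k d D E k_ge2 /zdef_hypergraph_def hypDE.
  have [e [D' [E' [[_ [_ defE']] embDE]]]] := embedNM k d D E k_ge2 hypDE.
  by exists e, D', E'.
- exact (ltd_def_hypergraph_embeds ltdNM (ltnW k_ge2) (zdef_hypergraph_def hypDE)).
- apply: ltd_of_zdef_hypergraph_embeds => k d D E k_ge2 zhypDE.
  have [e [D' [E' [[_ [_ defE']] embDE]]]] := embedNM k d D E k_ge2 zhypDE.
  by exists e, D', E'; split=> //; apply: zdefinable_definable.
Qed.
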